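(* Let $(W,+)$ be a commutative group with subgroups $F\le B\le W$, where $F=\{0,1\}$ has order $2$ (so $1$ denotes an element of order $2$ of $W$, and $F$ is identified with the field with two elements). Suppose that $\overline W=W/B$ is an elementary abelian $2$-group, regarded as a vector space over $F$. Let $\overline q:\overline W\to F$ be a quadratic form with associated bilinear form $\overline h:\overline W\times\overline W\to F$, $\overline h(\overline u,\overline v)=\overline q(\overline u+\overline v)-\overline q(\overline u)-\overline q(\overline v)$. Define $q:W\to F$ and $h:W\times W\to F$ by $q(u)=\overline q(u+B)$ and $h(u,v)=\overline h(u+B,v+B)$. Let $Q=\mathcal Q(F,B,W,\overline q)$ be the magma on $F\times W$ with multiplication $$(i,u)\cdot(j,v)=(i+j,\ u+v+jq(u)+ih(u,v)),$$ where $i+j$ and the products $jq(u)$, $ih(u,v)$ are computed in the field $F$ and then regarded as elements of $F\subseteq W$. Then: (i) $Q$ is a centrally nilpotent loop, and it is a central extension of the commutative group $B$ by the elementary abelian $2$-group $F\times\overline W$; (ii) $Q$ is congruence solvable and hence classically solvable; (iii) $Q$ is an extra loop; (iv) $Q$ is a group if and only if the quadratic form $\overline q$ is linear; (v) $X=0\times W$ is an abelian normal subloop of $Q$ (i.e. a normal subloop that is a commutative group); (vi) if $Q$ is not a group, then the congruence of $Q$ induced by $X$ is not abelian.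
   Context: A loop is a magma $(Q,\cdot,1)$ with two-sided identity $1$ in which all left and right translations $y\mapsto xy$, $y\mapsto yx$ are bijections. A subloop is normal if it is the kernel of a loop homomorphism. The nucleus $\mathrm{Nuc}(Q)$ is the set of $x$ with $x(yz)=(xy)z$, $y(xz)=(yx)z$, $y(zx)=(yz)x$ for all $y,z$; the center $Z(Q)$ consists of nuclear elements commuting with all elements. Given a commutative group $(X,+,0)$, a loop $F'$ and $\theta:F'\times F'\to X$ with $\theta_{1,r}=0=\theta_{r,1}$, the loop on $F'\times X$ with $(r,x)(s,y)=(rs,x+y+\theta_{r,s})$ is a central extension of $X$ by $F'$. A loop is centrally nilpotent if it has a series $Q=Q_0\ge Q_1\ge\dots\ge Q_n=1$ of normal subloops of $Q$ with $Q_i/Q_{i+1}\le Z(Q/Q_{i+1})$. A quadratic form on a vector space $V$ over a field $K$ is a map $q:V\to K$ with $q(\lambda u)=\lambda^2q(u)$ such that $(u,v)\mapsto q(u+v)-q(u)-q(v)$ is bilinear. An extra loop is a loop satisfying $x(y\cdot zx)=(xy\cdot z)x$. For a normal subloop $X$ of a loop $Q$, the induced congruence $\alpha_X$ has classes $\{aX\}$; $X$ induces an abelian congruence (is abelian in $Q$) if $[\alpha_X,\alpha_X]_Q$ is the trivial congruence in the Freese–McKenzie commutator theory of congruence modular varieties; equivalently, $Q$ is isomorphic to an abelian extension of $X$ by $Q/X$, i.e. a loop on $Q/X\times X$ with $(r,x)(s,y)=(rs,\varphi_{r,s}(x)+\psi_{r,s}(y)+\theta_{r,s})$ where $\varphi_{r,s},\psi_{r,s}\in\mathrm{Aut}(X)$,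 $\theta_{r,s}\in X$, $\varphi_{r,1}=\mathrm{id}=\psi_{1,r}$, $\theta_{1,r}=0=\theta_{r,1}$. A loop is classically solvable if it has a series $Q=Q_0\ge\dots\ge Q_n=1$ of normal subloops of $Q$ with each $Q_i/Q_{i+1}$ a commutative group; it is congruence solvable if it has such a series with each $Q_i/Q_{i+1}$ inducing an abelian congruence of $Q/Q_{i+1}$. *)

From HB Require Import structures.
From mathcomp Require Import all_boot all_algebra.
Set Implicit Arguments. Unset Strict Implicit. Unset Printing Implicit Defensive.
Import GRing.Theory.
Local Open Scope ring_scope.

Record magma := Magma { mcar :> Type; mmul : mcar -> mcar -> mcar; mone : mcar }.
Arguments Magma : clear implicits.
Arguments mmul {m} _ _.
Arguments mone m : assert.

Definition is_loop (Q : magma) : Prop :=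
  (forall x : Q, mmul (mone Q) x = x /\ mmul x (mone Q) = x) /\
  (forall x : Q, bijective (mmul x)) /\
  (forall x : Q, bijective (fun y : Q => mmul y x)).

Definition is_group (Q : magma) : Prop :=
  is_loop Q /\ forall x y z : Q, mmul x (mmul y z) = mmul (mmul x y) z.

Definition is_hom (Q P : magma) (f : Q -> P) : Prop :=
  forall x y : Q, f (mmul x y) = mmul (f x) (f y).

Definition is_iso (Q P : magma) (f : Q -> P) : Prop := is_hom f /\ bijective f.

Definition isomorphic (Q P : magma) : Prop := exists f : Q -> P, is_iso f.

Definition subsetP (T : Type) (A B : T -> Prop) : Prop := forall x, A x -> B x.

Definition imageP (T U : Type) (f : T -> U) (A : T -> Prop) : U -> Prop :=
  fun y => exists2 x, A x & f x = y.

Definition normal_subloop (Q : magma) (N : Q -> Prop) : Prop :=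
  exists P : magma, is_loop P /\
    exists f : Q -> P, is_hom f /\ forall x, N x <-> f x = mone P.

(* f : Q -> P is a surjective loop homomorphism with kernel N,
   i.e. P (with f) is the quotient loop Q/N (up to isomorphism) *)
Definition quotient_map (Q P : magma) (N : Q -> Prop) (f : Q -> P) : Prop :=
  is_loop P /\ is_hom f /\ (forall y : P, exists x, f x = y) /\
  forall x, N x <-> f x = mone P.

Definition in_nuc (Q : magma) (x : Q) : Prop :=
  forall y z : Q,
    mmul x (mmul y z) = mmul (mmul x y) z /\
    mmul y (mmul x z) = mmul (mmul y x) z /\
    mmul y (mmul z x) = mmul (mmul y z) x.

Definition in_center (Q : magma) (x : Q) : Prop :=
  in_nuc x /\ forall y : Q, mmul x y = mmul y x.

Definition comm_group_sub (Q : magma) (A : Q -> Prop) : Prop :=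
  forall x y z : Q, A x -> A y -> A z ->
    mmul x y = mmul y x /\ mmul x (mmul y z) = mmul (mmul x y) z.

Definition normal_series (Q : magma) (S : nat -> Q -> Prop) (n : nat) : Prop :=
  (forall x, S 0%N x) /\ (forall x, S n x <-> x = mone Q) /\
  (forall i, (i < n)%N -> subsetP (S i.+1) (S i)) /\
  (forall i, (i <= n)%N -> normal_subloop (S i)).

Definition centrally_nilpotent (Q : magma) : Prop :=
  is_loop Q /\ exists (n : nat) (S : nat -> Q -> Prop), normal_series S n /\
    forall i, (i < n)%N -> exists (P : magma) (f : Q -> P),
      quotient_map (S i.+1) f /\ subsetP (imageP f (S i)) (@in_center P).

Definition classically_solvable (Q : magma) : Prop :=
  is_loop Q /\ exists (n : nat) (S : nat -> Q -> Prop), normal_series S n /\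
    forall i, (i < n)%N -> exists (P : magma) (f : Q -> P),
      quotient_map (S i.+1) f /\ comm_group_sub (imageP f (S i)).

Definition aext_mul (L : magma) (X : zmodType) (phi psi : L -> L -> X -> X)
  (th : L -> L -> X) (a b : L * X) : L * X :=
  (mmul a.1 b.1, phi a.1 b.1 a.2 + psi a.1 b.1 b.2 + th a.1 b.1).

Definition aext (L : magma) (X : zmodType) (phi psi : L -> L -> X -> X)
  (th : L -> L -> X) : magma :=
  Magma (L * X)%type (aext_mul phi psi th) (mone L, 0).

Definition is_aut (X : zmodType) (f : X -> X) : Prop :=
  (forall x y, f (x + y) = f x + f y) /\ bijective f.

(* N induces an abelian congruence of Q (N is abelian in Q): Q is isomorphic to an
   abelian extension of a commutative group X by Q/N, the isomorphism carrying the
   congruence induced by N to the kernel of the projection onto the first factor *)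
Definition abelian_in (Q : magma) (N : Q -> Prop) : Prop :=
  exists (L : magma) (X : zmodType) (phi psi : L -> L -> X -> X) (th : L -> L -> X),
    is_loop L /\
    (forall r s, is_aut (phi r s) /\ is_aut (psi r s)) /\
    (forall r, phi r (mone L) =1 id /\ psi (mone L) r =1 id /\
               th (mone L) r = 0 /\ th r (mone L) = 0) /\
    exists f : Q -> aext phi psi th,
      is_iso f /\ forall x, N x <-> (f x : L * X).1 = mone L.

Definition congruence_solvable (Q : magma) : Prop :=
  is_loop Q /\ exists (n : nat) (S : nat -> Q -> Prop), normal_series S n /\
    forall i, (i < n)%N -> exists (P : magma) (f : Q -> P),
      quotient_map (S i.+1) f /\ abelian_in (imageP f (S i)).

Definition cext (L : magma) (X : zmodType) (th : L -> L -> X) : magma :=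
  aext (fun _ _ => id) (fun _ _ => id) th.

Definition central_extension_of (Q : magma) (X : zmodType) (L : magma) : Prop :=
  exists th : L -> L -> X,
    (forall r, th (mone L) r = 0 /\ th r (mone L) = 0) /\ isomorphic Q (cext th).

Definition is_extra (Q : magma) : Prop :=
  forall x y z : Q, mmul x (mmul y (mmul z x)) = mmul (mmul (mmul x y) z) x.

(* F = {0, one} <= W is identified with the field bool (xor = +, && = * ). *)

Definition embF (W : zmodType) (one : W) (b : bool) : W := if b then one else 0.

Definition hq (W : zmodType) (q : W -> bool) (u v : W) : bool :=
  q (u + v) (+) q u (+) q v.

Definition Qmul (W : zmodType) (one : W) (q : W -> bool) (a b : bool * W) : bool * W :=
  (a.1 (+) b.1, a.2 + b.2 + embF one (b.1 && q a.2) + embF one (a.1 && hq q a.2 b.2)).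

Definition Qloop (W : zmodType) (one : W) (q : W -> bool) : magma :=
  Magma (bool * W)%type (Qmul one q) (false, 0).

Definition FxW (W : zmodType) : magma :=
  Magma (bool * W)%type (fun a b => (a.1 (+) b.1, a.2 + b.2)) (false, 0).

From Pilot Require Import Defs.
From HB Require Import structures.
From mathcomp Require Import all_boot all_algebra.
From mathcomp Require Import boolp.
Import GRing.Theory.
Local Open Scope ring_scope.
Local Open Scope quotient_scope.
Set Implicit Arguments. Unset Strict Implicit. Unset Printing Implicit Defensive.

(** The loop Q is a central extension of B by the elementary abelian 2-group
    F x W/B: for a section s of W -> W/B with s(0) = 0, the map
    (i, u) |-> ((i, u + B), u - s(u + B)) is an isomorphism onto (F x W/B) x B
    with multiplication twisted by a normalized cocycle. Being a loop,
    central nilpotency (of class 2) and both kinds of solvability are then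
    inherited from the extension. The extra law and the group criterion are
    computations on the normal forms (i, u + c.1), which only use
    q(u + v) = q(u) + q(v) + h(u, v), bilinearity of h and h(u, u) = 0.
    Finally, if h(x, y) = 1 then X violates the term condition:
    ((0,x)(1,0))(0,2y) <> ((0,x)((1,0)(0,y)))(0,y), whereas equality holds
    with (0,0) in place of (0,x). *)

Local Infix "**" := mmul (at level 40, left associativity).

(** * Loops from abelian groups and central extensions *)

Definition trivial_magma : magma := Defs.Magma unit (fun _ _ => tt) tt.

Definition zmod_magma (Z : zmodType) : magma := Defs.Magma Z +%R 0.

Lemma trivial_magma_loop : is_loop trivial_magma.
Proof. by split=> [[]|]; last by split=> -[]; exists id => -[]. Qed.

Lemma zmod_magma_loop (Z : zmodType) : is_loop (zmod_magma Z).
Proof.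
split=> [x|]; first by rewrite /= add0r addr0.
split=> x; [exists (fun z => - x + z) | exists (fun z => z - x)] => y /=;
  by rewrite ?addKr ?addNKr ?addrK ?subrK.
Qed.

Lemma zmod_magma_center (Z : zmodType) (x : zmod_magma Z) : in_center x.
Proof. by split=> [y z|y] /=; rewrite ?addrA // (addrC y x) ?addrA. Qed.

Lemma center_comm_group (Q : magma) (A : Q -> Prop) :
  (forall x, A x -> in_center x) -> comm_group_sub A.
Proof. by move=> cA x y z /cA [nx cx] _ _; split; [exact: cx | case: (nx y z)]. Qed.

Lemma imageP_id (T : Type) (A : T -> Prop) x : Defs.imageP id A x <-> A x.
Proof. by split=> [[y Ay <-] | Ax]; last exists x. Qed.

Lemma iso_loop (Q P : magma) (f : Q -> P) :
  is_iso f -> f (mone Q) = mone P -> is_loop P -> is_loop Q.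
Proof.
move=> [fM fB] f1 [P1 [lP rP]]; have [g fK gK] := fB.
split=> [x|]; first by split; apply: (bij_inj fB); rewrite fM f1; case: (P1 (f x)).
split=> x.
- apply: (eq_bij (f := g \o mmul (f x) \o f)) => [|y /=]; last by rewrite -fM fK.
  by apply: bij_comp => //; apply: bij_comp => //; exact: Bijective gK fK.
- apply: (eq_bij (f := g \o (fun z => z ** f x) \o f)) => [|y /=]; last by rewrite -fM fK.
  by apply: bij_comp => //; apply: bij_comp => //; exact: Bijective gK fK.
Qed.

Lemma iso_center (Q P : magma) (f : Q -> P) (x : Q) :
  is_iso f -> in_center (f x) -> in_center x.
Proof.
move=> [fM /bij_inj fI] [nx cx]; split=> [y z|y]; last by apply: fI; rewrite !fM.
by have [? [? ?]] := nx (f y) (f z); split; [|split]; apply: fI; rewrite !fM.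
Qed.

Section CentralExtension.
Variables (L : magma) (X : zmodType) (th : L -> L -> X).
Hypotheses (HL : is_loop L) (th1 : forall r, th (mone L) r = 0 /\ th r (mone L) = 0).

Lemma cext_loop : is_loop (cext th).
Proof.
have [L1 [lL rL]] := HL.
split=> [[r x]|].
  by rewrite /= /aext_mul /=; case: (L1 r) (th1 r) => -> -> [-> ->]; rewrite add0r !addr0.
split=> -[r x].
- have [g rK gK] := lL r.
  exists (fun b : L * X => (g b.1, b.2 - (x + th r (g b.1)))) => -[s y];
    rewrite /= /aext_mul /=; first by rewrite rK [x + y]addrC -(addrA y) addrK.
  by rewrite gK addrAC addrC subrK.
- have [g rK gK] := rL r.
  exists (fun b : L * X => (g b.1, b.2 - (x + th (g b.1) r))) => -[s y];
    rewrite /= /aext_mul /=; first by rewrite rK -(addrA y) addrK.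
  by rewrite gK -addrA subrK.
Qed.

Lemma cext_center (x : X) : in_center ((mone L, x) : cext th).
Proof.
have [L1 _] := HL.
split=> [[r y] [s z]|[r y]]; rewrite /= /aext_mul /=; last first.
  by case: (L1 r) (th1 r) => -> -> [-> ->]; rewrite !addr0 addrC.
case: (L1 r) (L1 s) (L1 (r ** s)) (th1 r) (th1 s) (th1 (r ** s))
  => [-> ->] [-> ->] [-> ->] [-> ->] [-> ->] [-> ->].
by rewrite !addr0 !addrA (addrAC (y + z) _ x).
Qed.

Lemma abelian_in_cext (Q : magma) (N : Q -> Prop) (f : Q -> cext th) :
  is_iso f -> (forall x, N x <-> (f x).1 = mone L) -> abelian_in N.
Proof.
move=> fI fN; exists L, X, (fun _ _ => id), (fun _ _ => id), th.
split=> //; split; first by move=> r s; split; split=> //; exists id.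
by split=> [r | ]; [case: (th1 r) | exists f].
Qed.

End CentralExtension.

Lemma zmod_magma_abelian (Z : zmodType) (N : zmod_magma Z -> Prop) :
  (forall x, N x) -> abelian_in N.
Proof.
move=> NT.
apply: (@abelian_in_cext trivial_magma Z (fun _ _ => 0) trivial_magma_loop _ _ N
         (fun x : Z => (tt, x))).
- by [].
- split; first by move=> x y; rewrite /= /aext_mul /= addr0.
  by exists snd => // -[[] x].
- by move=> x; split.
Qed.

Lemma aext_term_condition (L : magma) (X : zmodType) (phi psi : L -> L -> X -> X)
    (th : L -> L -> X) (a b c d c' d' : aext phi psi th) :
  (forall r s, {morph phi r s : x y / x + y}) ->
  a.1 = b.1 -> c.1 = d.1 -> c'.1 = d'.1 ->
  a ** c ** c' = a ** d ** d' -> b ** c ** c' = b ** d ** d'.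
Proof.
case: a b c d c' d' => [r x] [_ y] [s z] [_ w] [s' z'] [_ w'] phiD /= <- <- <-.
rewrite /= /aext_mul /= => -[]; rewrite -!addrA !phiD -!addrA => /addrI E.
by congr (_, _ + _); rewrite E.
Qed.

Lemma abelian_in_term_condition (Q : magma) (N : Q -> Prop) (a b c n c' d' : Q) :
  abelian_in N -> N a -> N b -> N n -> N c' -> N d' ->
  a ** c ** c' = a ** (c ** n) ** d' -> b ** c ** c' = b ** (c ** n) ** d'.
Proof.
move=> [L [X [phi [psi [th [[L1 _] [Haut [_ [f [[fM fB] fN]]]]]]]]]] Na Nb Nn Nc' Nd'.
have f1 y : N y -> (f y).1 = mone L by move/fN.
have fcn : (f c ** f n).1 = (f c).1 by rewrite /= (f1 n Nn); case: (L1 (f c).1).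
move/(congr1 f); rewrite !fM => E; apply: (bij_inj fB); rewrite !fM.
apply: (aext_term_condition _ _ _ _ E); rewrite ?fcn // ?f1 //.
by move=> r s; case: (Haut r s) => -[].
Qed.

(** * Series of length two *)

Definition series2 (Q : magma) (N : Q -> Prop) (n : nat) (x : Q) : Prop :=
  match n with 0 => True | 1 => N x | _ => x = mone Q end.

Lemma quotient_map_id (Q : magma) :
  is_loop Q -> quotient_map (fun x : Q => x = mone Q) id.
Proof. by move=> HQ; do 2!split=> //; split=> // y; exists y. Qed.

Lemma series2_normal (Q P : magma) (N : Q -> Prop) (pi : Q -> P) :
  is_loop Q -> N (mone Q) -> quotient_map N pi -> normal_series (series2 N) 2.
Proof.
move=> HQ N1 [HP [piM [_ piN]]]; do 2!split=> //.
split; first by case=> [|[|]] // _ x /= ->.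
case=> [|[|[|]]] // _.
- by exists trivial_magma; split; [exact: trivial_magma_loop | exists (fun _ => tt)].
- by exists P; split=> //; exists pi.
- by exists Q; split=> //; exists id.
Qed.

Lemma two_step_series (R : forall M : magma, (M -> Prop) -> Prop)
    (Q P : magma) (N : Q -> Prop) (pi : Q -> P) :
  is_loop Q -> N (mone Q) -> quotient_map N pi ->
  R P (Defs.imageP pi (fun _ => True)) -> R Q (Defs.imageP id N) ->
  is_loop Q /\ exists n (S : nat -> Q -> Prop), normal_series S n /\
    forall i, (i < n)%N -> exists (P' : magma) (f : Q -> P'),
      quotient_map (S i.+1) f /\ R P' (Defs.imageP f (S i)).
Proof.
move=> HQ N1 piQ RP RQ; split=> //; exists 2%N, (series2 N).
split; first exact: series2_normal piQ.
case=> [|[|]] // _; first by exists P, pi.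
by exists Q, id; split=> //; exact: quotient_map_id.
Qed.

Lemma addr_rebase (V : zmodType) (u v a b s su sv : V) :
  u + v + a + b - s = (u - su) + (v - sv) + (su + sv - s + a + b).
Proof.
rewrite (addrACA u) -opprD -!(addrA (su + sv)) subrKA -!addrA.
by congr (_ + (_ + _)); rewrite addrA addrC.
Qed.

(** * The loop Q(F, B, W, qbar) *)

Section QuadraticLoop.
Variables (W : zmodType) (B : W -> Prop) (one : W) (q : W -> bool).
Hypotheses (Hone0 : one != 0) (Hone2 : one + one = 0)
  (HB0 : B 0) (HBsub : forall u v, B u -> B v -> B (u - v)) (HBone : B one)
  (HB2 : forall u, B (u + u))
  (Hqwd : forall u b, B b -> q (u + b) = q u)
  (Hq0 : q 0 = false)
  (Hhl : forall u u' v, hq q (u + u') v = hq q u v (+) hq q u' v)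
  (Hhr : forall u v v', hq q u (v + v') = hq q u v (+) hq q u v').

Local Notation F := (embF one).
Local Notation h := (hq q).
Local Notation Q := (Qloop one q).
Local Notation X := (fun a : Q => a.1 = false).
Local Notation N := (fun a : Q => a.1 = false /\ B a.2).

Lemma embF_B c : B (F c).
Proof. by case: c. Qed.

Lemma embFD a b : F a + F b = F (a (+) b).
Proof. by case: a; case: b; rewrite /= ?addr0 ?add0r. Qed.

Lemma embF_inj : injective F.
Proof. by case; case=> //= E; move: Hone0; rewrite E eqxx. Qed.

Lemma qB b : B b -> q b = false.
Proof. by move=> Bb; rewrite -[b]add0r Hqwd. Qed.

Lemma hqC u v : h u v = h v u.
Proof. by rewrite /hq addrC -addbA (addbC (q u)) addbA. Qed.

Lemma hqBr u b : B b -> h u b = false.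
Proof. by move=> Bb; rewrite /hq Hqwd // (qB Bb) addbb. Qed.

Lemma hqBl u b : B b -> h b u = false.
Proof. by move=> Bb; rewrite hqC hqBr. Qed.

Lemma hq_addB u v b b' : B b -> B b' -> h (u + b) (v + b') = h u v.
Proof. by move=> Bb Bb'; rewrite Hhl !Hhr (hqBr u Bb') (hqBr b Bb') (hqBl v Bb) !addbF. Qed.

Lemma hqxx u : h u u = false.
Proof. by rewrite /hq qB // addbb. Qed.

Lemma qD u v : q (u + v) = q u (+) q v (+) h u v.
Proof. by rewrite /hq; case: (q (u + v)); case: (q u); case: (q v). Qed.

(* Locked, so that rewriting with [Qmul_Qelt] cannot see a product as a
   normal form and proceeds from the innermost products outwards. *)
Fact Qelt_key : unit. Proof. by []. Qed.
Definition Qelt : bool -> W -> bool -> Q :=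
  locked_with Qelt_key (fun i u c => (i, u + F c)).
Canonical Qelt_unlockable := [unlockable fun Qelt].

Lemma QeltE i u : (i, u) = Qelt i u false.
Proof. by rewrite unlock addr0. Qed.

Lemma Qmul_Qelt i j u v c d :
  Qelt i u c ** Qelt j v d = Qelt (i (+) j) (u + v) (c (+) d (+) (j && q u) (+) (i && h u v)).
Proof.
rewrite !unlock /= /Qmul /= (Hqwd _ (embF_B c)) (hq_addB _ _ (embF_B c) (embF_B d)) -!embFD.
by congr (_, _); rewrite addrACA !addrA.
Qed.

Lemma Qelt_eq i j u v c d : i = j -> u = v -> c = d -> Qelt i u c = Qelt j v d.
Proof. by move=> -> -> ->. Qed.

Lemma Q_extra : is_extra Q.
Proof.
move=> [i u] [j v] [k w]; rewrite !QeltE !Qmul_Qelt.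
apply: Qelt_eq; first by case: i; case: j; case: k.
  by rewrite !addrA.
rewrite !qD !Hhl !Hhr !hqxx (hqC v u) (hqC w u).
move: (q u) (q v) (q w) (h u v) (h u w) (h v w) => a b c d e f.
by case: i; case: j; case: k; case: a; case: b; case: c; case: d; case: e; case: f.
Qed.

Lemma Qelt_inj i j u v c d : Qelt i u c = Qelt j v d -> u = v -> c = d.
Proof. by rewrite unlock => -[_ E] Euv; apply: embF_inj; apply: (addrI u); rewrite {2}Euv. Qed.

Lemma Q_assoc_iff :
  (forall x y z : Q, x ** (y ** z) = x ** y ** z) <-> (forall u v, q (u + v) = q u (+) q v).
Proof.
split=> [Qassoc u v | qD0].
  move: (Qassoc (false, u) (false, v) (true, 0)); rewrite !QeltE !Qmul_Qelt.
  by move/Qelt_inj; rewrite !addr0 => /(_ erefl) /=; rewrite !addbF addbC.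
have h0 u v : h u v = false by rewrite /hq qD0; case: (q u); case: (q v).
move=> [i u] [j v] [k w]; rewrite !QeltE !Qmul_Qelt.
apply: Qelt_eq; [by rewrite addbA | by rewrite addrA |].
rewrite !qD0 !h0; move: (q u) (q v) (q w) => a b c.
by case: i; case: j; case: k; case: a; case: b; case: c.
Qed.

Lemma X_comm_group : comm_group_sub X.
Proof.
move=> [i u] [j v] [k w] /= -> -> ->.
by rewrite /= /Qmul /= !addr0; split; [rewrite addrC | rewrite addrA].
Qed.

Definition inB : {pred W} := fun w => `[< B w >].

Lemma inBP w : reflect (B w) (w \in inB).
Proof. exact: asboolP. Qed.

Lemma inB_zmod_closed : zmod_closed inB.
Proof. by split=> [|u v /inBP Bu /inBP Bv]; apply/inBP; [|apply: HBsub]. Qed.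

HB.instance Definition _ := GRing.isZmodClosed.Build W inB inB_zmod_closed.

Record subB := SubB { subB_val :> W; _ : subB_val \in inB }.
HB.instance Definition _ := [isSub for subB_val].
HB.instance Definition _ := [Choice of subB by <:].
HB.instance Definition _ := [SubChoice_isSubZmodule of subB by <:].

Lemma val_subBD (x y : subB) : val (x + y) = val x + val y.
Proof. by []. Qed.

Local Notation WB := {ideal_quot inB}.
Local Notation piB := \pi_WB.

Lemma piBD : {morph piB : u v / u + v}.
Proof. exact: raddfD. Qed.

Lemma piBN : {morph piB : u / - u}.
Proof. exact: raddfN. Qed.

Lemma piB0 : piB 0 = 0.
Proof. exact: raddf0. Qed.

Lemma piB_eq0 u : piB u = 0 <-> B u.
Proof.
rewrite -piB0; split=> [/eqP|Bu]; first by rewrite -Quotient.idealrBE subr0 => /inBP.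
by apply/eqP; rewrite -Quotient.idealrBE subr0; apply/inBP.
Qed.

(* The case split makes the section vanish at 0, hence the cocycle normalized. *)
Definition liftB (c : WB) : W := if c == 0 then 0 else repr c.

Lemma liftB0 : liftB 0 = 0.
Proof. by rewrite /liftB eqxx. Qed.

Lemma liftBK : cancel liftB piB.
Proof. by move=> c; rewrite /liftB; case: eqP => [->|_]; rewrite ?piB0 ?reprK. Qed.

Lemma B_sub_liftB u : B (u - liftB (piB u)).
Proof. by apply/piB_eq0; rewrite piBD piBN liftBK subrr. Qed.

Lemma B_liftB_sub u : B (liftB (piB u) - u).
Proof. by apply/piB_eq0; rewrite piBD piBN liftBK subrr. Qed.

Lemma q_liftB u : q (liftB (piB u)) = q u.
Proof. by rewrite -(subrK u (liftB (piB u))) addrC (Hqwd _ (B_liftB_sub u)). Qed.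

Lemma hq_liftB u v : h (liftB (piB u)) (liftB (piB v)) = h u v.
Proof.
rewrite -(subrK u (liftB (piB u))) -(subrK v (liftB (piB v))) ![_ - _ + _]addrC.
by rewrite (hq_addB _ _ (B_liftB_sub u) (B_liftB_sub v)).
Qed.

Lemma piB_embF c : piB (F c) = 0.
Proof. exact/piB_eq0/embF_B. Qed.

Local Notation L := (zmod_magma (bool * WB)%type).

Definition prB (a : bool * W) : L := (a.1, piB a.2).

Lemma prB_surj (r : L) : prB (r.1, liftB r.2) = r.
Proof. by case: r => i c; rewrite /prB liftBK. Qed.

Lemma prB_eq1 a : (a.1 = false /\ B a.2) <-> prB a = mone L.
Proof.
case: a => i u; rewrite /prB /=; split=> [[-> /piB_eq0 ->] // | [-> /piB_eq0]].
by split.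
Qed.

Lemma prB_quotient_Q : quotient_map (fun a : Q => a.1 = false /\ B a.2) prB.
Proof.
split; first exact: zmod_magma_loop.
split; first by move=> [i u] [j v]; rewrite /prB /= /Qmul /= !piBD !piB_embF !addr0.
by split=> [r|a]; [exists (r.1, liftB r.2); exact: prB_surj | exact: prB_eq1].
Qed.

Lemma prB_quotient_FxW : quotient_map (fun a : FxW W => a.1 = false /\ B a.2) prB.
Proof.
split; first exact: zmod_magma_loop.
split; first by move=> [i u] [j v]; rewrite /prB /= piBD.
by split=> [r|a]; [exists (r.1, liftB r.2); exact: prB_surj | exact: prB_eq1].
Qed.

(* The B-coordinate of the product of the section values at r and s. *)
Definition cocycle (r s : L) : W :=
  liftB r.2 + liftB s.2 - liftB (r.2 + s.2)
  + F (s.1 && q (liftB r.2)) + F (r.1 && h (liftB r.2) (liftB s.2)).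

Lemma B_cocycle r s : B (cocycle r s).
Proof. by apply/piB_eq0; rewrite !piBD piBN !liftBK !piB_embF !addr0 subrr. Qed.

Lemma insubdB w : B w -> val (insubd (0 : subB) w) = w.
Proof. by move/inBP; apply: insubdK. Qed.

Definition cocycleB (r s : L) : subB := insubd 0 (cocycle r s).

Lemma val_cocycleB r s : val (cocycleB r s) = cocycle r s.
Proof. exact/insubdB/B_cocycle. Qed.

Definition coordB (u : W) : subB := insubd 0 (u - liftB (piB u)).

Lemma val_coordB u : val (coordB u) = u - liftB (piB u).
Proof. exact/insubdB/B_sub_liftB. Qed.

Lemma cocycleB_normal r : cocycleB (mone L) r = 0 /\ cocycleB r (mone L) = 0.
Proof.
split; apply: val_inj; rewrite val_cocycleB /= /cocycle /= liftB0.
  by rewrite !add0r Hq0 andbF subrr /= !addr0.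
by rewrite !addr0 (hqBr _ HB0) andbF subrr /= !addr0.
Qed.

Definition Q_to_cext (a : Q) : cext cocycleB := (prB a, coordB a.2).

Lemma Q_to_cext_iso : is_iso Q_to_cext.
Proof.
split.
- move=> [i u] [j v]; rewrite /Q_to_cext /= /aext_mul /=; congr (_, _).
    by rewrite /prB /= /Qmul /= !piBD !piB_embF !addr0.
  apply: val_inj; rewrite !val_subBD val_cocycleB !val_coordB.
  rewrite /cocycle /= !piBD !piB_embF !addr0 q_liftB hq_liftB.
  exact: addr_rebase.
- exists (fun x : cext cocycleB => (x.1.1, liftB x.1.2 + val x.2)).
    by move=> [i u]; rewrite /= val_coordB subrKC.
  move=> [[i c] x]; have x0 : piB (val x) = 0 by apply/piB_eq0/inBP/valP.
  rewrite /Q_to_cext /prB /= piBD liftBK x0 addr0; congr (_, _).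
  by apply: val_inj; rewrite val_coordB piBD liftBK x0 addr0 addrC addKr.
Qed.

Lemma Q_to_cext_one : Q_to_cext (mone Q) = mone (cext cocycleB).
Proof.
rewrite /Q_to_cext /prB /= piB0; congr (_, _).
by apply: val_inj; rewrite val_coordB piB0 liftB0 subrr.
Qed.

Lemma Q_loop : is_loop Q.
Proof.
exact: iso_loop Q_to_cext_iso Q_to_cext_one (cext_loop (zmod_magma_loop _) cocycleB_normal).
Qed.

Lemma Q_center b : B b -> in_center ((false, b) : Q).
Proof.
move=> Bb; apply: (iso_center Q_to_cext_iso).
have -> : Q_to_cext (false, b) = (mone L, coordB b).
  by rewrite /Q_to_cext /prB /= (proj2 (piB_eq0 b) Bb).
exact: cext_center (zmod_magma_loop _) cocycleB_normal _.
Qed.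

Lemma Q_group_iff : is_group Q <-> forall u v, q (u + v) = q u (+) q v.
Proof.
apply: iff_trans Q_assoc_iff; split=> [[] //|Qassoc]; split=> //; exact: Q_loop.
Qed.

Lemma X_normal : normal_subloop X.
Proof.
exists (zmod_magma bool); split; first exact: zmod_magma_loop.
by exists (fun a : Q => a.1); split=> // -[i u] [j v].
Qed.

Lemma X_not_abelian_in : ~ is_group Q -> ~ abelian_in X.
Proof.
move=> ngQ abX.
have [[x [y hxy]] | h0] := pselect (exists x y, h x y); last first.
  apply: ngQ; apply/Q_group_iff => u v; rewrite qD.
  by case huv: (h u v); [case: h0; exists u, v | rewrite addbF].
have := @abelian_in_term_condition Q _ (false, 0) (false, x) (true, 0) (false, y)
  (false, y + y) (false, y) abX.
move=> /(_ erefl erefl erefl erefl erefl); rewrite !QeltE !Qmul_Qelt => TC.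
rewrite /= !add0r !addr0 Hq0 !(hqBl _ HB0) !Hhr !Hhl ?hqxx ?(hqBr _ HB0) !addrA hxy in TC.
by move/(_ erefl)/Qelt_inj/(_ erefl): TC; case: (q x).
Qed.

Lemma Q_central_extension :
  exists L : magma, is_loop L /\
    (exists pi : FxW W -> L, quotient_map (fun a : FxW W => a.1 = false /\ B a.2) pi) /\
    exists Bg : zmodType,
      (exists iota : Bg -> W, (forall x y, iota (x + y) = iota x + iota y) /\
         injective iota /\ forall w, B w <-> exists x, iota x = w) /\
      central_extension_of Q Bg L.
Proof.
exists L; split; first exact: zmod_magma_loop.
split; first by exists prB; exact: prB_quotient_FxW.
exists subB; split.
  exists val; do 2!split=> //; first exact: val_inj.
  by split=> [Bw | [x <-]]; [exists (insubd 0 w); exact: insubdB | exact/inBP/valP].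
by exists cocycleB; split; [exact: cocycleB_normal | exists Q_to_cext; exact: Q_to_cext_iso].
Qed.

Lemma N_one : N (mone Q).
Proof. by split. Qed.

Lemma image_N_center x : Defs.imageP id N x -> in_center x.
Proof. by case: x => i u /imageP_id [/= -> Bu]; exact: Q_center. Qed.

Lemma Q_centrally_nilpotent : centrally_nilpotent Q.
Proof.
apply: (two_step_series (R := fun P A => Defs.subsetP A (@in_center P))
  Q_loop N_one prB_quotient_Q).
- by move=> r _; exact: zmod_magma_center.
- exact: image_N_center.
Qed.

Lemma Q_classically_solvable : classically_solvable Q.
Proof.
apply: (two_step_series (R := @comm_group_sub) Q_loop N_one prB_quotient_Q).
- by apply: center_comm_group => r _; exact: zmod_magma_center.
- exact: center_comm_group image_N_center.
Qed.

Lemma Q_congruence_solvable : congruence_solvable Q.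
Proof.
apply: (two_step_series (R := @abelian_in) Q_loop N_one prB_quotient_Q).
- by apply: zmod_magma_abelian => r; exists (r.1, liftB r.2); last exact: prB_surj.
- apply: (abelian_in_cext (zmod_magma_loop _) cocycleB_normal Q_to_cext_iso) => x.
  exact: iff_trans (imageP_id _ _) (prB_eq1 x).
Qed.

End QuadraticLoop.

Theorem proposition3p1 (W : zmodType) (B : W -> Prop) (one : W) (q : W -> bool)
  (* F = {0, one} is a subgroup of order 2 of W *)
  (Hone0 : one != 0) (Hone2 : one + one = 0)
  (* B is a subgroup of W with F <= B *)
  (HB0 : B 0) (HBsub : forall u v, B u -> B v -> B (u - v)) (HBone : B one)
  (* W/B is an elementary abelian 2-group *)
  (HB2 : forall u, B (u + u))
  (* q = qbar o (W -> W/B): q is constant on cosets of B *)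
  (Hqwd : forall u b, B b -> q (u + b) = q u)
  (* qbar is a quadratic form over F: qbar(0 * u) = 0 and h is F-bilinear *)
  (Hq0 : q 0 = false)
  (Hhl : forall u u' v, hq q (u + u') v = hq q u v (+) hq q u' v)
  (Hhr : forall u v v', hq q u (v + v') = hq q u v (+) hq q u v') :
  let Q := Qloop one q in
  let X : Q -> Prop := fun a => a.1 = false in
  (* (i) *)
  (is_loop Q /\ centrally_nilpotent Q /\
   exists L : magma, is_loop L /\
     (exists pi : FxW W -> L, quotient_map (fun a : FxW W => a.1 = false /\ B a.2) pi) /\
     exists Bg : zmodType,
       (exists iota : Bg -> W, (forall x y, iota (x + y) = iota x + iota y) /\
          injective iota /\ forall w, B w <-> exists x, iota x = w) /\
       central_extension_of Q Bg L) /\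
  (* (ii) *)
  (congruence_solvable Q /\ classically_solvable Q) /\
  (* (iii) *)
  is_extra Q /\
  (* (iv) *)
  (is_group Q <-> forall u v, q (u + v) = q u (+) q v) /\
  (* (v) *)
  (normal_subloop X /\ comm_group_sub X) /\
  (* (vi) *)
  (~ is_group Q -> ~ abelian_in X).
Proof.
move=> Q X; split.
  split; first by apply: (Q_loop (B := B)).
  by split; [apply: (Q_centrally_nilpotent (B := B)) | apply: Q_central_extension].
split; first by split; [apply: (Q_congruence_solvable (B := B)) |
                        apply: (Q_classically_solvable (B := B))].
split; first by apply: (Q_extra (B := B)).
split; first by apply: (Q_group_iff (B := B)).
split; first by split; [apply: X_normal | apply: X_comm_group].
by apply: (X_not_abelian_in (B := B)).
Qed.
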